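(* Let $M\ge1$ and $0\le j<M$. Let $\mathbf k^j=(k^j_0,\dots,k^j_{M-1})$ satisfy $k^j_i=\infty$ for $i<j$, with $k^j_j\le k^j_{j+1}\le\dots\le k^j_{M-1}$ positive integers. Define $\mathbf k^{j+1}$ by $$k^{j+1}_i=\begin{cases}k^j_i-\left\lceil k^j_i/k^j_j\right\rceil, & i>j,\\ \infty, & i\le j.\end{cases}$$ If $\mathbf k^{j+1}$ is schedulable, then $\mathbf k^j$ is schedulable. Moreover, there exists a schedule satisfying $\mathbf k^j$ in which task $v_j$ is scheduled exactly every $k^j_j$ slots.
   Context: Pinwheel scheduling: given a vector $\mathbf k=(k_0,\dots,k_{M-1})$ with entries in $\mathbb Z_{>0}\cup\{\infty\}$, a schedule is an assignment of at most one task from $\{v_0,\dots,v_{M-1}\}$ to each time slot. The schedule satisfies $\mathbf k$ if, for every $i$ with $k_i<\infty$, the gap between consecutive occurrences of $v_i$ (and the time until its first occurrence) is at most $k_i$. Equivalently, every window of $k_i$ consecutive slots contains $v_i$. An entry $k_i=\infty$ means task $v_i$ is absent and imposes no constraint. The vector $\mathbf k$ is schedulable if such a schedule exists. *)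

From mathcomp Require Import all_boot.
Set Implicit Arguments. Unset Strict Implicit. Unset Printing Implicit Defensive.

(* A pinwheel vector on tasks v_0..v_{M-1}: [None] encodes the entry infinity. *)
Definition kvec (M : nat) := 'I_M -> option nat.

Definition schedule (M : nat) := nat -> option 'I_M.

Definition satisfies (M : nat) (S : schedule M) (k : kvec M) : Prop :=
  forall (i : 'I_M) (n : nat), k i = Some n ->
    forall t : nat, exists s : nat, t <= s < t + n /\ S s = Some i.

Definition schedulable (M : nat) (k : kvec M) : Prop :=
  exists S : schedule M, satisfies S k.

Definition ceil_div (a b : nat) : nat := (a + b.-1) %/ b.

Definition kvec_j (M : nat) (j : 'I_M) (f : 'I_M -> nat) : kvec M :=
  fun i => if i < j then None else Some (f i).

Definition kvec_next (M : nat) (j : 'I_M) (f : 'I_M -> nat) : kvec M :=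
  fun i => if j < i then Some (f i - ceil_div (f i) (f j)) else None.

From mathcomp Require Import all_boot zify.

Set Implicit Arguments.
Unset Strict Implicit.
Unset Printing Implicit Defensive.

(* Give v_j the slots t with t mod p = p - 1, where p = k^j_j, and run a
   schedule for k^{j+1} on the remaining slots, in order. Among any n
   consecutive slots at most ceil(n/p) are taken by v_j, so the n-window
   contains n - ceil(n/p) consecutive free slots, i.e. a full window of the
   schedule for k^{j+1}. *)

Lemma divnD_leq_ceil p t n : 0 < p -> (t + n) %/ p <= t %/ p + ceil_div n p.
Proof. by rewrite /ceil_div => p_gt0; nia. Qed.

(* Discrete intermediate value theorem for functions growing by steps of 0 or 1. *)
Lemma unit_step_hit (g : nat -> nat) t n u :
    (forall x, g x.+1 <= (g x).+1 /\ g x <= g x.+1) ->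
    g t <= u < g (t + n) -> exists s, t <= s < t + n /\ g s = u /\ g s.+1 = u.+1.
Proof.
move=> g_step; elim: n => [|n IHn]; first by rewrite addn0; lia.
move=> /andP[gt_le_u]; rewrite addnS => u_lt.
have [u_lt_n|n_le_u] := ltnP u (g (t + n)).
  have [s [s_in gs]] := IHn (introT andP (conj gt_le_u u_lt_n)).
  by exists s; split => //; lia.
by exists (t + n); have := g_step (t + n); lia.
Qed.

Section Interleave.

Variables (p : nat) (M : nat) (j : 'I_M) (S' : schedule M).
Hypothesis p_gt0 : 0 < p.

Definition reserved_slot t := t %% p == p.-1.

(* Number of slots before t that are not reserved for v_j. *)
Definition free_index t := t - t %/ p.

(* Tasks [i <= j] of [S'] are dropped, so that v_j runs exactly on the
   reserved slots. *)
Definition interleave : schedule M := fun t =>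
  if reserved_slot t then Some j
  else if S' (free_index t) is Some i then (if j < i then Some i else None)
  else None.

Lemma free_indexS t : free_index t.+1 = free_index t + ~~ reserved_slot t.
Proof. by rewrite /free_index /reserved_slot; case: eqP => /= reserved; nia. Qed.

Lemma free_indexD_ceil t n :
  free_index t + (n - ceil_div n p) <= free_index (t + n).
Proof.
have ceil_le_n : ceil_div n p <= n by rewrite /ceil_div; nia.
by have := divnD_leq_ceil t n p_gt0; have := leq_div t p; rewrite /free_index; lia.
Qed.

Lemma interleave_eq_j t : interleave t = Some j <-> t %% p = p.-1.
Proof.
rewrite /interleave /reserved_slot; case: eqP => [-> // | not_reserved].
split=> [|/not_reserved //].
case: (S' _) => // i; case: ifP => // j_lt_i [i_eq_j].
by rewrite i_eq_j ltnn in j_lt_i.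
Qed.

Lemma interleave_window_j t : exists s, t <= s < t + p /\ interleave s = Some j.
Proof.
exists (t %/ p * p + p.-1); split.
  by have := divn_eq t p; have := ltn_pmod t p_gt0; lia.
by apply/interleave_eq_j; rewrite modnMDl modn_small // ltn_predL.
Qed.

Lemma interleave_window (i : 'I_M) n : j < i ->
    (forall u, exists s, u <= s < u + (n - ceil_div n p) /\ S' s = Some i) ->
  forall t, exists s, t <= s < t + n /\ interleave s = Some i.
Proof.
move=> j_lt_i S'_window t.
have [u [u_in S'_u]] := S'_window (free_index t).
have g_step x : free_index x.+1 <= (free_index x).+1 /\ free_index x <= free_index x.+1.
  by rewrite free_indexS; case: reserved_slot => /=; lia.
have u_range : free_index t <= u < free_index (t + n).
  by have := free_indexD_ceil t n; lia.
have [s [s_in [fs_eq fsS_eq]]] := unit_step_hit g_step u_range.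
exists s; split => //.
have free_s : ~~ reserved_slot s.
  by move: fsS_eq; rewrite free_indexS fs_eq; case: reserved_slot => /=; lia.
by rewrite /interleave (negbTE free_s) fs_eq S'_u j_lt_i.
Qed.

End Interleave.

Lemma interleave_satisfies M (j : 'I_M) (f : 'I_M -> nat) (S' : schedule M) :
    0 < f j -> satisfies S' (kvec_next j f) ->
  satisfies (interleave (f j) j S') (kvec_j j f).
Proof.
move=> fj_gt0 S'_sat i n; rewrite /kvec_j; case: ifP => // i_ge_j [<-].
have [->|i_neq_j] := eqVneq i j; first exact: interleave_window_j.
have j_lt_i : j < i by rewrite ltn_neqAle eq_sym i_neq_j leqNgt i_ge_j.
apply: interleave_window => //.
by apply: S'_sat; rewrite /kvec_next j_lt_i.
Qed.

Theorem lemma4 (M : nat) (j : 'I_M) (f : 'I_M -> nat)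
  (hpos : forall i : 'I_M, j <= i -> 0 < f i)
  (hmono : forall i i' : 'I_M, j <= i -> i <= i' -> f i <= f i')
  (hsched : schedulable (kvec_next j f)) :
  schedulable (kvec_j j f) /\
  exists S : schedule M,
    satisfies S (kvec_j j f) /\
    exists a : nat, a < f j /\
      forall t : nat, S t = Some j <-> t %% f j = a.
Proof.
have fj_gt0 : 0 < f j := hpos j (leqnn j).
have [S' S'_sat] := hsched.
have S_sat := interleave_satisfies fj_gt0 S'_sat.
split; first by exists (interleave (f j) j S').
exists (interleave (f j) j S'); split => //.
exists (f j).-1; split; first by rewrite prednK.
exact: interleave_eq_j.
Qed.
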